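(* Let $X=\mathbb{R}^n$ and suppose A1–A3 hold. Let $\{x_k\}$ be generated by Algorithm 1 in which the acceptance test is replaced by $$f(x_k+\alpha_k\beta^{l}d_k)\le R_k+\rho\alpha_k\beta^{l}\langle\nabla f(x_k),d_k\rangle,$$ where $R_k$ satisfies $f(x_k)\le R_k\le\max_{0\le j\le m(k)}f(x_{k-j})$, with integers $m(0)=0$ and $0\le m(k)\le\min\{m(k-1)+1,N\}$ for $k\ge1$, for a fixed $N\in\mathbb{N}$ (i.e. $\nu_{k,l}=R_k-f(x_k)$). If the level set $\{x\in\mathbb{R}^n:\ f(x)\le f(x_0)\}$ is bounded, then either there exists $\bar k$ with $\nabla f(x_{\bar k})=0$, or $\liminf_{k\to\infty}\|\nabla f(x_k)\|=0$.
   Context: Let $(X,\langle\cdot,\cdot\rangle)$ be a real Hilbert space with induced norm $\|\cdot\|$, and $f:X\to\mathbb{R}$ Fréchet differentiable with gradient $\nabla f$. Algorithm 1 (general non-monotone descent algorithm): parameters $x_0\in X$, $\alpha_0>0$, $\beta,\rho\in(0,1)$. For $k=0,1,2,\dots$: choose $d_k\in X$ with $\langle\nabla f(x_k),d_k\rangle<0$; then for $l=0,1,2,\dots$ choose a number $\nu_{k,l}\ge 0$ and test $$f(x_k+\alpha_k\beta^l d_k)\le f(x_k)+\rho\alpha_k\beta^l\langle\nabla f(x_k),d_k\rangle+\nu_{k,l};$$ let $l_k$ be the first $l$ for which this holds, set $\nu_k:=\nu_{k,l_k}$, $x_{k+1}=x_k+\alpha_k\beta^{l_k}d_k$ and $\alpha_{k+1}=\alpha_k\beta^{l_k-1}$.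 It is assumed the algorithm generates infinite sequences (all $l_k$ finite). Assumptions: A1: $\nabla f$ is Lipschitz continuous with constant $L>0$. A2: there is $f_{low}\in\mathbb{R}$ with $f(x)\ge f_{low}$ for all $x\in X$. A3: there are constants $c_1,c_2>0$ with $\langle\nabla f(x_k),d_k\rangle\le -c_1\|\nabla f(x_k)\|^2$ and $\|d_k\|\le c_2\|\nabla f(x_k)\|$ for all $k$. *)

From Stdlib Require Fin.
From Stdlib Require Import Reals Lra Lia ZArith.
Open Scope R_scope.

Definition vec (n : nat) := Fin.t n -> R.

Fixpoint fsum (n : nat) : (Fin.t n -> R) -> R :=
  match n return (Fin.t n -> R) -> R with
  | O => fun _ => 0
  | S m => fun g => g Fin.F1 + fsum m (fun i => g (Fin.FS i))
  end.

Definition inner {n : nat} (u v : vec n) : R := fsum n (fun i => u i * v i).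
Definition vnorm {n : nat} (u : vec n) : R := sqrt (inner u u).
Definition vadd {n : nat} (u v : vec n) : vec n := fun i => u i + v i.
Definition vsub {n : nat} (u v : vec n) : vec n := fun i => u i - v i.
Definition vscale {n : nat} (a : R) (u : vec n) : vec n := fun i => a * u i.
Definition vzero (n : nat) : vec n := fun _ => 0.

Definition has_gradient {n : nat} (f : vec n -> R) (g : vec n -> vec n) : Prop :=
  forall x : vec n, forall eps : R, eps > 0 -> exists delta : R, delta > 0 /\
    forall h : vec n, vnorm h < delta ->
      Rabs (f (vadd x h) - f x - inner (g x) h) <= eps * vnorm h.

Fixpoint maxf (g : nat -> R) (m : nat) : R :=
  match m with
  | O => g O
  | S p => Rmax (maxf g p) (g (S p))
  end.

(** Under A1 the accepted step sizes are bounded below: every rejected trial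
    step exceeds (1 - rho) c1 / (L c2^2), since shorter steps always pass the
    test.  Hence each iteration lowers f below the reference value R_k by a
    fixed multiple of the squared gradient norm.  The running maximum of f
    over the last m(k) + 1 iterates is then nonincreasing, and over every
    block of N + 1 iterations it drops by at least that decrease.  If the
    gradient norms stayed away from 0, this maximum would tend to -oo,
    contradicting A2. *)

From Stdlib Require Import Reals ZArith Lra Lia Psatz FunctionalExtensionality Classical.
Open Scope R_scope.

Lemma fsum_le n (a b : Fin.t n -> R) : (forall i, a i <= b i) -> fsum n a <= fsum n b.
Proof.
  induction n as [|n IH]; intros Hab; simpl; [lra|].
  specialize (IH (fun i => a (Fin.FS i)) (fun i => b (Fin.FS i)) (fun i => Hab (Fin.FS i))).
  specialize (Hab Fin.F1). lra.
Qed.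

Lemma fsum_plus n (a b : Fin.t n -> R) : fsum n (fun i => a i + b i) = fsum n a + fsum n b.
Proof.
  induction n as [|n IH]; simpl; [lra|].
  rewrite (IH (fun i => a (Fin.FS i)) (fun i => b (Fin.FS i))). lra.
Qed.

Lemma fsum_scal n (c : R) (a : Fin.t n -> R) : fsum n (fun i => c * a i) = c * fsum n a.
Proof.
  induction n as [|n IH]; simpl; [lra|].
  rewrite (IH (fun i => a (Fin.FS i))). lra.
Qed.

Lemma fsum_ext n (a b : Fin.t n -> R) : (forall i, a i = b i) -> fsum n a = fsum n b.
Proof. intros Hab. f_equal. apply functional_extensionality, Hab. Qed.

Lemma inner_self_nonneg {n} (u : vec n) : 0 <= inner u u.
Proof.
  unfold inner. replace 0 with (fsum n (fun i => 0 * (u i * u i))).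
  - apply fsum_le. intros i. nra.
  - rewrite fsum_scal. lra.
Qed.

Lemma inner_scale_r {n} (u v : vec n) (a : R) : inner u (vscale a v) = a * inner u v.
Proof. unfold inner, vscale. rewrite <- fsum_scal. apply fsum_ext. intros i. ring. Qed.

Lemma inner_sub_l {n} (u w v : vec n) : inner (vsub u w) v = inner u v - inner w v.
Proof.
  unfold inner, vsub.
  replace (fsum n (fun i => w i * v i)) with (- fsum n (fun i => -1 * (w i * v i)))
    by (rewrite fsum_scal; ring).
  unfold Rminus. rewrite Ropp_involutive, <- fsum_plus. apply fsum_ext. intros i. ring.
Qed.

Lemma vnorm_nonneg {n} (u : vec n) : 0 <= vnorm u.
Proof. apply sqrt_pos. Qed.

Lemma vnorm_sqr {n} (u : vec n) : vnorm u ^ 2 = inner u u.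
Proof. unfold vnorm. apply pow2_sqrt, inner_self_nonneg. Qed.

Lemma vnorm_scale {n} (u : vec n) (a : R) : vnorm (vscale a u) = Rabs a * vnorm u.
Proof.
  unfold vnorm.
  replace (inner (vscale a u) (vscale a u)) with ((a * a) * inner u u).
  - rewrite sqrt_mult_alt by apply Rle_0_sqr. rewrite <- sqrt_Rsqr_abs. reflexivity.
  - unfold inner, vscale. rewrite <- fsum_scal. apply fsum_ext. intros i. ring.
Qed.

Lemma inner_amgm {n} (w v : vec n) (a : R) :
  0 < a -> 2 * inner w v <= inner w w / a + a * inner v v.
Proof.
  intros Ha. unfold inner, Rdiv.
  rewrite (Rmult_comm _ (/ a)), <- !fsum_scal, <- fsum_plus.
  apply fsum_le. intros i.
  assert (Hsq : 0 <= / a * (w i - a * v i) ^ 2)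
    by (apply Rmult_le_pos; [left; apply Rinv_0_lt_compat; lra | apply pow2_ge_0]).
  replace (/ a * (w i - a * v i) ^ 2)
    with (/ a * (w i * w i) + a * (v i * v i) - 2 * (w i * v i)) in Hsq by (field; lra).
  lra.
Qed.

Lemma inner_le_of_vnorm_le {n} (w v : vec n) (a : R) :
  0 < a -> vnorm w <= a * vnorm v -> inner w v <= a * vnorm v ^ 2.
Proof.
  intros Ha Hw.
  assert (Hsq : inner w w <= a * (a * vnorm v ^ 2)).
  { rewrite <- vnorm_sqr. pose proof (vnorm_nonneg w). nra. }
  assert (Hdiv : inner w w / a <= a * vnorm v ^ 2).
  { apply Rmult_le_reg_r with a; [lra|]. unfold Rdiv.
    rewrite Rmult_assoc, Rinv_l by lra. lra. }
  pose proof (inner_amgm w v a Ha) as Hamgm. rewrite <- (vnorm_sqr v) in Hamgm. lra.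
Qed.

Lemma has_gradient_derivable_line {n} (f : vec n -> R) (grad : vec n -> vec n)
  (y v : vec n) (c : R) :
  has_gradient f grad ->
  derivable_pt_lim (fun s => f (vadd y (vscale s v))) c (inner (grad (vadd y (vscale c v))) v).
Proof.
  intros Hgrad eps Heps. set (p := vadd y (vscale c v)).
  pose proof (vnorm_nonneg v) as Hv.
  destruct (Hgrad p (eps / 2 / (vnorm v + 1))) as [del [Hdel Hp]].
  { apply Rdiv_lt_0_compat; lra. }
  assert (Hdel' : 0 < del / (vnorm v + 1)) by (apply Rdiv_lt_0_compat; lra).
  exists (mkposreal _ Hdel'). simpl. intros h Hh0 Hh.
  replace (vadd y (vscale (c + h) v)) with (vadd p (vscale h v))
    by (apply functional_extensionality; intros i; unfold p, vadd, vscale; ring).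
  assert (Hah : 0 < Rabs h) by (apply Rabs_pos_lt; auto).
  assert (Hhv : vnorm (vscale h v) < del).
  { rewrite vnorm_scale.
    assert (Rabs h * (vnorm v + 1) < del)
      by (apply Rmult_lt_reg_r with (/ (vnorm v + 1));
          [apply Rinv_0_lt_compat; lra | rewrite Rmult_assoc, Rinv_r; lra]).
    nra. }
  specialize (Hp _ Hhv). rewrite inner_scale_r, vnorm_scale in Hp.
  set (g := inner (grad p) v) in *.
  replace ((f (vadd p (vscale h v)) - f p) / h - g)
    with ((f (vadd p (vscale h v)) - f p - h * g) / h) by (field; auto).
  unfold Rdiv at 1. rewrite Rabs_mult, Rabs_inv.
  apply Rle_lt_trans with (eps / 2 / (vnorm v + 1) * (Rabs h * vnorm v) * / Rabs h).
  { apply Rmult_le_compat_r; [left; apply Rinv_0_lt_compat|]; auto. }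
  replace (eps / 2 / (vnorm v + 1) * (Rabs h * vnorm v) * / Rabs h)
    with (eps / 2 * (vnorm v / (vnorm v + 1))) by (field; lra).
  assert (vnorm v / (vnorm v + 1) < 1)
    by (apply Rmult_lt_reg_r with (vnorm v + 1); [lra|];
        unfold Rdiv; rewrite Rmult_assoc, Rinv_l; lra).
  assert (0 <= vnorm v / (vnorm v + 1)) by (unfold Rdiv; apply Rmult_le_pos; [lra | left; apply Rinv_0_lt_compat; lra]).
  nra.
Qed.

Section LipschitzGradient.

Variables (n : nat) (f : vec n -> R) (grad : vec n -> vec n) (L : R).
Hypothesis Hgrad : has_gradient f grad.
Hypothesis HL_pos : L > 0.
Hypothesis HL : forall x y : vec n, vnorm (vsub (grad x) (grad y)) <= L * vnorm (vsub x y).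

(* The constant is L rather than L/2 because the mean value theorem replaces
   the integral form of Taylor's formula. *)
Lemma lipschitz_descent (y v : vec n) (t : R) :
  0 < t -> f (vadd y (vscale t v)) <= f y + t * inner (grad y) v + L * t ^ 2 * vnorm v ^ 2.
Proof.
  intros Ht.
  destruct (MVT_cor2 (fun s => f (vadd y (vscale s v)))
              (fun s => inner (grad (vadd y (vscale s v))) v) 0 t Ht)
    as [c [Hmvt [Hc0 Hct]]].
  { intros c _. apply has_gradient_derivable_line, Hgrad. }
  replace (vadd y (vscale 0 v)) with y in Hmvt
    by (apply functional_extensionality; intros i; unfold vadd, vscale; ring).
  set (w := vsub (grad (vadd y (vscale c v))) (grad y)).
  assert (Hsplit : inner (grad (vadd y (vscale c v))) v = inner (grad y) v + inner w v)
    by (unfold w; rewrite inner_sub_l; ring).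
  assert (Hw : vnorm w <= L * c * vnorm v).
  { eapply Rle_trans; [apply HL|].
    replace (vsub (vadd y (vscale c v)) y) with (vscale c v)
      by (apply functional_extensionality; intros i; unfold vsub, vadd, vscale; ring).
    rewrite vnorm_scale, Rabs_pos_eq by lra. lra. }
  assert (Hwv : inner w v <= L * c * vnorm v ^ 2)
    by (apply inner_le_of_vnorm_le; [nra | lra]).
  assert (L * c * vnorm v ^ 2 <= L * t * vnorm v ^ 2)
    by (apply Rmult_le_compat_r; [apply pow2_ge_0 | nra]).
  rewrite Hsplit in Hmvt. nra.
Qed.

Lemma armijo_small_step (rho c1 c2 : R) (y v : vec n) (Rref t : R) :
  rho < 1 -> c1 > 0 -> c2 > 0 ->
  inner (grad y) v <= - c1 * vnorm (grad y) ^ 2 -> vnorm v <= c2 * vnorm (grad y) ->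
  f y <= Rref -> 0 < t -> t <= (1 - rho) * c1 / (L * c2 ^ 2) ->
  f (vadd y (vscale t v)) <= Rref + rho * t * inner (grad y) v.
Proof.
  intros Hrho Hc1 Hc2 Hdir Hv Hy Ht Htmax.
  pose proof (lipschitz_descent y v t Ht) as Hdesc.
  set (G := vnorm (grad y)) in *. set (gv := inner (grad y) v) in *.
  assert (HG : 0 <= G) by apply vnorm_nonneg.
  assert (Hvv : vnorm v ^ 2 <= c2 ^ 2 * G ^ 2)
    by (rewrite <- Rpow_mult_distr; apply pow_incr; pose proof (vnorm_nonneg v); lra).
  assert (HtL : t * (L * c2 ^ 2) <= (1 - rho) * c1).
  { assert (0 < L * c2 ^ 2) by (apply Rmult_lt_0_compat; [lra | apply pow_lt; lra]).
    apply Rmult_le_compat_r with (r := L * c2 ^ 2) in Htmax; [|lra].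
    unfold Rdiv in Htmax. rewrite Rmult_assoc, Rinv_l in Htmax by lra. lra. }
  assert (L * t ^ 2 * vnorm v ^ 2 <= t * (t * (L * c2 ^ 2)) * G ^ 2).
  { replace (t * (t * (L * c2 ^ 2)) * G ^ 2) with (L * t ^ 2 * (c2 ^ 2 * G ^ 2)) by ring.
    apply Rmult_le_compat_l; [nra | lra]. }
  assert (t * (t * (L * c2 ^ 2)) * G ^ 2 <= t * ((1 - rho) * c1) * G ^ 2)
    by (apply Rmult_le_compat_r; [nra | apply Rmult_le_compat_l; lra]).
  assert (t * ((1 - rho) * c1) * G ^ 2 <= (1 - rho) * t * - gv)
    by (replace (t * ((1 - rho) * c1) * G ^ 2) with ((1 - rho) * t * (c1 * G ^ 2)) by ring;
        apply Rmult_le_compat_l; nra).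
  nra.
Qed.

End LipschitzGradient.

Lemma armijo_sufficient_decrease (fnext Rref rho t tmin gv c1 G : R) :
  fnext <= Rref + rho * t * gv -> gv <= - c1 * G ^ 2 ->
  0 < rho -> 0 < c1 -> 0 < tmin <= t ->
  fnext <= Rref - rho * tmin * c1 * G ^ 2.
Proof.
  intros Hnext Hgv Hrho Hc1 Ht.
  assert (HG : 0 <= c1 * G ^ 2) by (apply Rmult_le_pos; [lra | apply pow2_ge_0]).
  assert (Htgv : t * gv <= - (tmin * (c1 * G ^ 2))) by nra.
  apply Rmult_le_compat_l with (r := rho) in Htgv; [|lra].
  rewrite <- Rmult_assoc in Htgv. lra.
Qed.

Section Backtracking.

Variables (beta tbar : R) (alpha : nat -> R) (l : nat -> nat).
Hypothesis Hbeta : 0 < beta < 1.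
Hypothesis Halpha_0 : 0 < alpha O.
Hypothesis Halpha : forall k, alpha (S k) = alpha k * powerRZ beta (Z.of_nat (l k) - 1).
Hypothesis Hrejected : forall k j, (j < l k)%nat -> tbar < alpha k * beta ^ j.

Lemma backtracking_alpha_pos k : 0 < alpha k.
Proof.
  induction k as [|k IH]; [exact Halpha_0|].
  rewrite Halpha. apply Rmult_lt_0_compat; [exact IH | apply powerRZ_lt; lra].
Qed.

Lemma backtracking_alpha_ge k : Rmin (alpha O) tbar <= alpha k.
Proof.
  induction k as [|k IH]; [apply Rmin_l|].
  rewrite Halpha. destruct (l k) as [|j] eqn:Hl.
  - replace (powerRZ beta (Z.of_nat 0 - 1)) with (/ beta) by (simpl; field; lra).
    assert (1 <= / beta) by (rewrite <- Rinv_1; apply Rinv_le_contravar; lra).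
    pose proof (backtracking_alpha_pos k). nra.
  - replace (Z.of_nat (S j) - 1)%Z with (Z.of_nat j) by lia. rewrite <- pow_powerRZ.
    assert (tbar < alpha k * beta ^ j) by (apply Hrejected; lia).
    pose proof (Rmin_r (alpha O) tbar). lra.
Qed.

Lemma backtracking_step_ge k : beta * Rmin (alpha O) tbar <= alpha k * beta ^ l k.
Proof.
  pose proof (backtracking_alpha_ge k) as Hk.
  pose proof (backtracking_alpha_pos k).
  destruct (l k) as [|j] eqn:Hl; simpl.
  - nra.
  - assert (tbar < alpha k * beta ^ j) by (apply Hrejected; lia).
    pose proof (Rmin_r (alpha O) tbar). nra.
Qed.

End Backtracking.

Lemma maxf_ge (g : nat -> R) (m j : nat) : (j <= m)%nat -> g j <= maxf g m.
Proof.
  induction m as [|m IH]; intros Hj; simpl.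
  - replace j with O by lia. lra.
  - destruct (Nat.eq_dec j (S m)) as [->|Hne]; [apply Rmax_r|].
    eapply Rle_trans; [apply IH; lia | apply Rmax_l].
Qed.

Lemma maxf_le (g : nat -> R) (m : nat) (C : R) :
  (forall j, (j <= m)%nat -> g j <= C) -> maxf g m <= C.
Proof.
  induction m as [|m IH]; intros H; simpl; [apply H; lia|].
  apply Rmax_lub; [apply IH; intros; apply H | apply H]; lia.
Qed.

Definition ref_max (F : nat -> R) (m : nat -> nat) (k : nat) : R :=
  maxf (fun j => F (k - j)%nat) (m k).

Section NonmonotoneDecrease.

Variables (F e : nat -> R) (m : nat -> nat) (N : nat) (flow : R).
Hypothesis Hm_succ : forall k, (m (S k) <= S (m k))%nat.
Hypothesis Hm_bound : forall k, (m k <= N)%nat.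
Hypothesis HF_lower : forall k, flow <= F k.
Hypothesis He_nonneg : forall k, 0 <= e k.
Hypothesis HF_decrease : forall k, F (S k) <= ref_max F m k - e k.

Lemma le_ref_max k : F k <= ref_max F m k.
Proof.
  unfold ref_max. rewrite <- Nat.sub_0_r at 1.
  apply (maxf_ge (fun j => F (k - j)%nat)). lia.
Qed.

Lemma ref_max_succ_le k : ref_max F m (S k) <= ref_max F m k.
Proof.
  unfold ref_max at 1. apply maxf_le. intros [|j] Hj.
  - rewrite Nat.sub_0_r. pose proof (HF_decrease k) as Hk. pose proof (He_nonneg k). lra.
  - replace (S k - S j)%nat with (k - j)%nat by lia.
    apply (maxf_ge (fun j => F (k - j)%nat)). specialize (Hm_succ k). lia.
Qed.

Lemma ref_max_le p k : ref_max F m (p + k) <= ref_max F m k.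
Proof.
  induction p as [|p IH]; simpl; [lra|].
  eapply Rle_trans; [apply ref_max_succ_le | exact IH].
Qed.

(* Every one of the at most N + 1 values entering ref_max at time N + k + 1
   was produced by a step taken at some time >= k. *)
Lemma ref_max_block_decrease (K : nat) (delta : R) :
  (forall k, (K <= k)%nat -> delta <= e k) ->
  forall k, (K <= k)%nat -> ref_max F m (S (N + k)) <= ref_max F m k - delta.
Proof.
  intros He k Hk. unfold ref_max at 1. apply maxf_le. intros j Hj.
  pose proof (Hm_bound (S (N + k))).
  replace (S (N + k) - j)%nat with (S (N + k - j)) by lia.
  set (i := (N + k - j)%nat).
  assert (Hi : ref_max F m i <= ref_max F m k)
    by (replace i with ((i - k) + k)%nat by (unfold i; lia); apply ref_max_le).
  pose proof (HF_decrease i). pose proof (He i ltac:(unfold i; lia)). lra.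
Qed.

Lemma nonmonotone_decrease_liminf (delta : R) :
  0 < delta -> forall K, exists k, (K <= k)%nat /\ e k < delta.
Proof.
  intros Hdelta K. apply NNPP. intros Hnone.
  assert (He : forall k, (K <= k)%nat -> delta <= e k).
  { intros k Hk. apply Rnot_lt_le. intros Hlt. apply Hnone. exists k. auto. }
  assert (Hiter : forall p, ref_max F m (p * S N + K) <= ref_max F m K - INR p * delta).
  { induction p as [|p IH]; [simpl; lra|].
    replace (S p * S N + K)%nat with (S (N + (p * S N + K))) by lia.
    eapply Rle_trans; [apply (ref_max_block_decrease K); [exact He | lia]|].
    rewrite S_INR. lra. }
  destruct (INR_unbounded ((ref_max F m K - flow) / delta)) as [p Hp].
  assert (INR p * delta > ref_max F m K - flow).
  { apply Rmult_gt_compat_r with (r := delta) in Hp; [|lra].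
    unfold Rdiv in Hp. rewrite Rmult_assoc, Rinv_l in Hp by lra. lra. }
  pose proof (Hiter p). pose proof (le_ref_max (p * S N + K)).
  pose proof (HF_lower (p * S N + K)). lra.
Qed.

End NonmonotoneDecrease.

Theorem corollary3
  (n : nat) (f : vec n -> R) (grad : vec n -> vec n)
  (Hdiff : has_gradient f grad)
  (* A1 *)
  (HA1 : exists L : R, L > 0 /\ forall x y : vec n,
           vnorm (vsub (grad x) (grad y)) <= L * vnorm (vsub x y))
  (* A2 *)
  (HA2 : exists flow : R, forall x : vec n, f x >= flow)
  (* parameters *)
  (alpha0 beta rho : R) (N : nat)
  (Halpha0 : alpha0 > 0) (Hbeta : 0 < beta < 1) (Hrho : 0 < rho < 1)
  (* generated sequences *)
  (x : nat -> vec n) (d : nat -> vec n) (alpha : nat -> R)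
  (l : nat -> nat) (Rk : nat -> R) (m : nat -> nat)
  (Hm0 : m O = O)
  (HmS : forall k, (m (S k) <= Nat.min (m k + 1) N)%nat)
  (HR : forall k, f (x k) <= Rk k /\
          Rk k <= maxf (fun j => f (x (k - j)%nat)) (m k))
  (Hdesc : forall k, inner (grad (x k)) (d k) < 0)
  (Halpha_0 : alpha O = alpha0)
  (Hacc : forall k,
     f (vadd (x k) (vscale (alpha k * beta ^ l k) (d k)))
       <= Rk k + rho * (alpha k * beta ^ l k) * inner (grad (x k)) (d k))
  (Hfirst : forall k (j : nat), (j < l k)%nat ->
     ~ (f (vadd (x k) (vscale (alpha k * beta ^ j) (d k)))
          <= Rk k + rho * (alpha k * beta ^ j) * inner (grad (x k)) (d k)))
  (Hx : forall k, x (S k) = vadd (x k) (vscale (alpha k * beta ^ l k) (d k)))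
  (Halpha : forall k,
     alpha (S k) = alpha k * powerRZ beta (Z.of_nat (l k) - 1))
  (* A3 *)
  (HA3 : exists c1 c2 : R, c1 > 0 /\ c2 > 0 /\ forall k,
     inner (grad (x k)) (d k) <= - c1 * (vnorm (grad (x k)))^2 /\
     vnorm (d k) <= c2 * vnorm (grad (x k)))
  (* bounded level set *)
  (Hlevel : exists B : R, forall y : vec n, f y <= f (x O) -> vnorm y <= B) :
  (exists kb : nat, grad (x kb) = vzero n) \/
  (forall eps : R, eps > 0 -> forall K : nat,
     exists k : nat, (K <= k)%nat /\ vnorm (grad (x k)) < eps).
Proof.
  destruct HA1 as [L [HL_pos HL]], HA2 as [flow Hflow], HA3 as [c1 [c2 [Hc1 [Hc2 HA3]]]].
  rewrite <- Halpha_0 in Halpha0.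
  set (tbar := (1 - rho) * c1 / (L * c2 ^ 2)).
  assert (Hrejected : forall k j, (j < l k)%nat -> tbar < alpha k * beta ^ j).
  { intros k j Hj. apply Rnot_le_lt. intros Hle. apply (Hfirst k j Hj).
    destruct (HA3 k), (HR k).
    pose proof (backtracking_alpha_pos beta alpha l Hbeta Halpha0 Halpha k).
    apply (armijo_small_step n f grad L Hdiff HL_pos HL rho c1 c2); auto; try lra.
    apply Rmult_lt_0_compat; [lra | apply pow_lt; lra]. }
  set (s := beta * Rmin (alpha O) tbar).
  assert (Hs : 0 < s).
  { apply Rmult_lt_0_compat; [lra|]. apply Rmin_glb_lt; [lra|].
    apply Rdiv_lt_0_compat; [nra | apply Rmult_lt_0_compat; [lra | apply pow_lt; lra]]. }
  set (e k := rho * s * c1 * vnorm (grad (x k)) ^ 2).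
  assert (Hdecrease : forall k, f (x (S k)) <= ref_max (fun i => f (x i)) m k - e k).
  { intros k. destruct (HA3 k) as [Hdir _], (HR k) as [_ Href].
    pose proof (backtracking_step_ge beta tbar alpha l Hbeta Halpha0 Halpha Hrejected k).
    assert (f (x (S k)) <= Rk k - e k).
    { rewrite Hx. apply armijo_sufficient_decrease
        with (alpha k * beta ^ l k) (inner (grad (x k)) (d k)); auto; lra. }
    unfold ref_max. lra. }
  assert (Hrate : 0 < rho * s * c1) by (apply Rmult_lt_0_compat; [apply Rmult_lt_0_compat|]; lra).
  right. intros eps Heps K.
  destruct (nonmonotone_decrease_liminf (fun i => f (x i)) e m N flow
              ltac:(intros k; specialize (HmS k); lia)
              ltac:(intros k; destruct k; [rewrite Hm0 | specialize (HmS k)]; lia)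
              ltac:(intros k; specialize (Hflow (x k)); lra)
              ltac:(intros k; apply Rmult_le_pos; [lra | apply pow2_ge_0])
              Hdecrease (rho * s * c1 * eps ^ 2)
              ltac:(apply Rmult_lt_0_compat; [lra | apply pow_lt; lra]) K)
    as [k [Hk Hek]].
  exists k. split; [exact Hk|].
  apply Rmult_lt_reg_l in Hek; [|exact Hrate].
  apply Rnot_le_lt. intros Hge. apply (Rlt_not_le _ _ Hek), pow_incr. lra.
Qed.
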